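(* Let $G$ be a finite solvable group, $H$ a subgroup of $G$, and $i\geq 1$ an integer. Then there exist finitely many (possibly zero) subgroups $H_1,\dots,H_r$ of $G$ and one-dimensional characters $\chi_j$ of $H_j$ such that \[\mathrm{Ind}_H^G(1_H)=\mathrm{Ind}_{HG^i}^G(1_{HG^i})+\sum_{j=1}^r \mathrm{Ind}_{H_j}^G(\chi_j).\]
   Context: The derived series of $G$ is $G^0=G$, $G^1=[G,G]$, $G^{k}=[G^{k-1},G^{k-1}]$ for $k\ge1$, where $[X,X]$ is the subgroup generated by all commutators $xyx^{-1}y^{-1}$, $x,y\in X$. $1_H$ is the trivial character of $H$, $\mathrm{Ind}$ denotes induction of characters, and a one-dimensional character is a character of degree $1$. *)

From HB Require Import structures.
From mathcomp Require Import all_boot all_order all_algebra all_fingroup all_solvable all_field all_character.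
Set Implicit Arguments.
Unset Strict Implicit.
Unset Printing Implicit Defensive.

From HB Require Import structures.
From mathcomp Require Import all_boot all_order all_algebra all_fingroup all_solvable all_field all_character.
From mathcomp Require Import ring.
Import GRing.Theory Num.Theory.
Set Implicit Arguments.
Unset Strict Implicit.
Unset Printing Implicit Defensive.
Local Open Scope group_scope.
Local Open Scope ring_scope.

(* Going down the derived series one step at a time, it suffices to treat
   L = J A with A normal in L and A' <= J.  Then D = J :&: A is normal in L
   and contains A', so the irreducible characters lambda of A with D in their
   kernel are linear; each extends to a linear character of its inertia group
   I_L(lambda) by a * j |-> lambda a (a in A, j in J).  Comparing values, the
   sum of the induced characters Ind_{I_L(lambda)}^L of these extensions, one
   lambda per L-orbit, is Ind_J^L 1, and the trivial orbit contributes 1_L. *)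

Lemma cfclass_Iirr0 (gT : finGroupType) (A L : {group gT}) :
  cfclass_Iirr L (0 : Iirr A) = [set 0].
Proof.
apply/setP => s; rewrite inE; apply/imsetP/eqP => [[y _ ->] | ->].
  exact: conjg_Iirr0.
by exists 1%g; rewrite ?group1 ?conjg_Iirr0.
Qed.

Section LinearExtension.

Variables (gT : finGroupType) (L A J : {group gT}).
Hypotheses (nAL : A <| L) (sJL : J \subset L) (sLJA : L \subset (J * A)%g)
  (sA'J : A^`(1)%g \subset J).

Let D := (J :&: A)%G.

Let sAL : A \subset L. Proof. exact: normal_sub. Qed.
Let nAJ : J \subset 'N(A). Proof. exact: subset_trans sJL (normal_norm nAL). Qed.
Let mulAJ : (A * J)%g = L.
Proof. by apply/eqP; rewrite eqEsubset mul_subG //= -(normC nAJ). Qed.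
Let sDA : D \subset A. Proof. exact: subsetIr. Qed.
Let nDA : D <| A. Proof. by apply: sub_der1_normal; rewrite // subsetI sA'J der_sub. Qed.
Let nDL : D <| L.
Proof.
rewrite /normal (subset_trans sDA sAL) -mulAJ mul_subG //.
  exact: normal_norm nDA.
by rewrite normsI ?normG.
Qed.

Definition irr_kerD := [set t : Iirr A | D \subset cfker 'chi_t].

Lemma irr_kerD_lin t : t \in irr_kerD -> 'chi_t \is a linear_char.
Proof.
by rewrite inE => sDker; rewrite lin_irr_der1 (subset_trans _ sDker) // subsetI sA'J der_sub.
Qed.

Lemma irr_kerD0 : 0 \in irr_kerD.
Proof. by rewrite inE irr0 cfker_cfun1. Qed.

Lemma cfInd1_kerD : 'Ind[A, D] 1 = \sum_(t in irr_kerD) 'chi_t.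
Proof.
rewrite [LHS]cfun_sum_cfdot (bigID (mem irr_kerD)) /= [X in _ + X]big1 ?addr0.
  apply: eq_bigr => t tD; rewrite -Frobenius_reciprocity.
  have /[!inE] sDker := tD.
  by rewrite cfRes_sub_ker // lin_char1 ?irr_kerD_lin // scale1r cfnorm1 scale1r.
move=> t tD; rewrite -Frobenius_reciprocity.
have [-> | nz] := eqVneq '[1 : 'CF(D), 'Res[D] 'chi_t] 0; first by rewrite scale0r.
have : 0 \in irr_constt ('Res[D] 'chi_t) by rewrite irr_consttE irr0 cfdotC conjC_eq0.
by move/(constt0_Res_cfker nDA); rewrite inE in tD; rewrite (negPf tD).
Qed.

Lemma sum_irr_kerD w : w \in A ->
  \sum_(t in irr_kerD) 'chi_t w = #|A : D|%:R * (w \in D)%:R.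
Proof.
by move=> Aw; rewrite -sum_cfunE -cfInd1_kerD cfInd_cfun1 // cfunE cfuniE.
Qed.

Definition jpart x := odflt 1%g [pick j in J | (x * j^-1)%g \in A].

Lemma jpartP x : x \in L -> jpart x \in J /\ (x * (jpart x)^-1)%g \in A.
Proof.
rewrite -mulAJ => /mulsgP[a j Aa Jj ->]; rewrite /jpart.
case: pickP => [k /andP[] // | /(_ j)].
by rewrite Jj -mulgA mulgV mulg1 Aa.
Qed.

(* The value 1 for t outside irr_kerD only makes [lin_ext t] total. *)
Definition lin_ext_fun (t : Iirr A) x :=
  if t \in irr_kerD then 'chi_t (x * (jpart x)^-1)%g else 1.

Lemma lin_ext_funE t x j : t \in irr_kerD -> j \in J -> (x * j^-1)%g \in A ->
  lin_ext_fun t x = 'chi_t (x * j^-1)%g.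
Proof.
move=> tD Jj Axj; have Lx : x \in L.
  by rewrite -mulAJ; apply/mulsgP; exists (x * j^-1)%g j; rewrite ?mulgKV.
have [Jk Axk] := jpartP Lx; rewrite /lin_ext_fun tD.
set k := jpart x in Jk Axk *.
have Djk : (j * k^-1)%g \in D.
  rewrite in_setI groupM ?groupV //=.
  have -> : (j * k^-1 = (x * j^-1)^-1 * (x * k^-1))%g.
    by rewrite invMg invgK !mulgA mulgKV.
  by rewrite groupM ?groupV.
have -> : (x * k^-1 = (x * j^-1) * (j * k^-1))%g by rewrite !mulgA mulgKV.
by rewrite cfkerMr //; apply: subsetP Djk; rewrite inE in tD.
Qed.

Lemma lin_ext_fun1 t : lin_ext_fun t 1%g = 1.
Proof.
case tD: (t \in irr_kerD); last by rewrite /lin_ext_fun tD.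
by rewrite (@lin_ext_funE t 1%g 1%g) // ?invg1 ?mulg1 // lin_char1 ?irr_kerD_lin.
Qed.

Lemma lin_ext_funM t :
  {in 'I_L['chi_t] &, {morph lin_ext_fun t : x y / (x * y)%g >-> x * y}}.
Proof.
case tD: (t \in irr_kerD); last by move=> x y _ _; rewrite /lin_ext_fun tD mulr1.
move=> x y /setIP[Lx Ix] /setIP[Ly Iy].
have [Jj Axj] := jpartP Lx; have [Jk Ayk] := jpartP Ly.
set j := jpart x in Jj Axj *; set k := jpart y in Jk Ayk *.
have Ij : j \in 'I['chi_t].
  have -> : j = ((x * j^-1)^-1 * x)%g by rewrite invMg invgK mulgKV.
  by rewrite groupM ?groupV // (subsetP (sub_inertia _)).
have Ayk_j : ((y * k^-1) ^ j^-1)%g \in A.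
  by rewrite memJ_norm // (subsetP nAJ) ?groupV.
have xyE : (x * y * (j * k)^-1 = (x * j^-1) * (y * k^-1) ^ j^-1)%g.
  by rewrite invMg conjgE invgK !mulgA mulgKV.
have Axy : (x * y * (j * k)^-1)%g \in A by rewrite xyE groupM.
rewrite (lin_ext_funE tD (groupM Jj Jk) Axy) xyE.
rewrite (lin_charM (irr_kerD_lin tD) Axj Ayk_j) inertia_valJ ?groupV //.
by rewrite /lin_ext_fun tD.
Qed.

Fact lin_ext_repr t :
  mx_repr 'I_L['chi_t] (fun x => (lin_ext_fun t x)%:M : 'M[algC]_1).
Proof.
split=> [|x y Ix Iy]; first by rewrite lin_ext_fun1.
by rewrite -scalar_mxM lin_ext_funM.
Qed.

Definition lin_ext t : 'CF('I_L['chi_t]) := cfRepr (MxRepresentation (lin_ext_repr t)).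

Lemma lin_ext_lin t : lin_ext t \is a linear_char.
Proof. by apply/andP; split; [exact: cfRepr_char | rewrite cfRepr1]. Qed.

Lemma lin_extE t x : lin_ext t x = (x \in 'I_L['chi_t])%:R * lin_ext_fun t x.
Proof. by rewrite cfunE mxtrace_scalar; case: (x \in _); rewrite ?mul1r ?mul0r. Qed.

(* The indicator of [j \in 'I_L['chi_t]] is '['chi_t, 'chi_t ^ j], an average over A. *)
Lemma lin_ext_cfdot t a j : t \in irr_kerD -> a \in A -> j \in J ->
  lin_ext t (a * j)%g = #|A|%:R^-1 * \sum_(c in A) 'chi_t (c^-1 * a * c ^ j^-1)%g.
Proof.
move=> tD Aa Jj; have lin_t := irr_kerD_lin tD.
have Lj : j \in L by apply: subsetP Jj.
have Nj : j \in 'N(A) by apply: subsetP Jj.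
have Aajj : (a * j * j^-1)%g \in A by rewrite mulgK.
rewrite lin_extE (lin_ext_funE tD Jj Aajj) mulgK.
have -> : ((a * j)%g \in 'I_L['chi_t]) = (j \in 'I_L['chi_t]).
  by rewrite groupMl // (subsetP (sub_Inertia _ sAL)).
rewrite -(cfdot_irr_conjg _ nAL Lj) cfdotE -mulrA; congr (_ * _).
rewrite mulr_suml (reindex_inj invg_inj) /=.
apply: eq_big => [c | c Ac']; first by rewrite groupV.
have Ac : c \in A by rewrite -groupV.
have Ac'j : (c^-1 ^ j^-1)%g \in A by rewrite memJ_norm ?groupV.
rewrite cfConjgE // -(lin_charV_conj lin_t Ac'j) -conjVg invgK.
have Acj : (c ^ j^-1)%g \in A by rewrite memJ_norm ?groupV.
have Aca : (c^-1 * a)%g \in A by rewrite groupM.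
by rewrite (lin_charM lin_t Aca Acj) (lin_charM lin_t Ac' Aa) mulrAC.
Qed.

Lemma sum_lin_ext z : z \in L ->
  \sum_(t in irr_kerD) lin_ext t z =
    #|A|%:R^-1 * #|A : D|%:R * \sum_(c in A) ((z ^ c)%g \in J)%:R.
Proof.
move=> Lz; have [Jj Aa] := jpartP Lz.
set j := jpart z in Jj Aa; set a := (z * j^-1)%g in Aa.
have zE : z = (a * j)%g by rewrite mulgKV.
rewrite zE (eq_bigr _ (fun t tD => lin_ext_cfdot tD Aa Jj)) -mulr_sumr.
rewrite exchange_big /= -mulrA; congr (_ * _).
rewrite mulr_sumr; apply: eq_bigr => c Ac.
have Acj : (c ^ j^-1)%g \in A by rewrite memJ_norm ?groupV // (subsetP nAJ).
have Aw : (c^-1 * a * c ^ j^-1)%g \in A by rewrite groupM // groupM ?groupV.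
rewrite sum_irr_kerD //; congr (_ * _%:R).
have -> : ((a * j) ^ c = (c^-1 * a * c ^ j^-1) * j)%g.
  by rewrite !conjgE invgK !mulgA !mulgKV.
by rewrite (groupMr _ Jj) inE Aw andbT.
Qed.

Lemma irr_kerD_conjg t y : t \in irr_kerD -> y \in L -> conjg_Iirr t y \in irr_kerD.
Proof.
move=> tD Ly; have Ny : y \in 'N(A) by apply: subsetP Ly; apply: normal_norm.
have NDy : y \in 'N(D) by apply: subsetP Ly; apply: normal_norm.
rewrite inE conjg_IirrE cfker_conjg // -(normP NDy) conjSg.
by rewrite inE in tD.
Qed.

Lemma lin_ext_conjg t y z : t \in irr_kerD -> y \in J ->
  lin_ext (conjg_Iirr t y) z = lin_ext t (z ^ y^-1)%g.
Proof.
move=> tD Jy; have Ly : y \in L by apply: subsetP Jy.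
have Ny : y \in 'N(A) by apply: subsetP Jy.
have tyD := irr_kerD_conjg tD Ly.
rewrite !lin_extE.
have -> : (z \in 'I_L['chi_(conjg_Iirr t y)]) = ((z ^ y^-1)%g \in 'I_L['chi_t]).
  by rewrite !in_setI conjg_IirrE -(conjg_inertia _ Ny) mem_conjg (groupJr _ (groupVr Ly)).
case Iz: (_ \in 'I_L[_]); rewrite ?mul0r // !mul1r.
have Lz : z \in L by move: Iz; rewrite inE groupJr ?groupV // => /andP[].
have [Jk Azk] := jpartP Lz; set k := jpart z in Jk Azk.
have Jky : (k ^ y^-1)%g \in J by rewrite groupJr ?groupV.
have Azky : ((z ^ y^-1) * (k ^ y^-1)^-1)%g \in A.
  by rewrite -conjVg -conjMg memJ_norm ?groupV.
rewrite (lin_ext_funE tD Jky Azky) (lin_ext_funE tyD Jk Azk).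
by rewrite conjg_IirrE cfConjgE // conjMg conjVg.
Qed.

Lemma sum_lin_ext_conjg t y g : t \in irr_kerD -> y \in L ->
  \sum_(x in L) lin_ext (conjg_Iirr t y) (g ^ x)%g = \sum_(x in L) lin_ext t (g ^ x)%g.
Proof.
move=> tD Ly; have /mulsgP[a k Aa Jk ->] : y \in (A * J)%g by rewrite mulAJ.
have Lk : k \in L by apply: subsetP Jk.
have -> : conjg_Iirr t (a * k)%g = conjg_Iirr t k.
  apply: irr_inj; rewrite !conjg_IirrE (cfConjgM _ nAL (subsetP sAL a Aa) Lk).
  by rewrite (cfConjg_id _ Aa).
transitivity (\sum_(x in L) lin_ext t (g ^ (x * k^-1))%g).
  by apply: eq_bigr => x _; rewrite lin_ext_conjg // conjgM.
rewrite [RHS](reindex_inj (mulIg k^-1%g)) /=.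
by apply: eq_bigl => x; rewrite groupMr ?groupV.
Qed.

Definition lin_orbits := [set cfclass_Iirr L t | t in irr_kerD].

Definition orbit_rep (O : {set Iirr A}) := odflt 0 [pick s in O].

Lemma orbit_repP O : O \in lin_orbits ->
  orbit_rep O \in irr_kerD /\ cfclass_Iirr L (orbit_rep O) = O.
Proof.
case/imsetP=> t tD ->; rewrite /orbit_rep.
case: pickP => [s /imsetP[y Ly ->] | /(_ t)]; last by rewrite cfclass_IirrE cfclass_refl.
split; first exact: irr_kerD_conjg.
by apply/eqP; rewrite eq_cfclass_IirrE; apply: imset_f.
Qed.

Lemma cfInd_lin_ext_orbit O g : O \in lin_orbits ->
  'Ind[L] (lin_ext (orbit_rep O)) g = #|L|%:R^-1 *
    \sum_(s in irr_kerD | cfclass_Iirr L s == O) \sum_(x in L) lin_ext s (g ^ x)%g.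
Proof.
case/orbit_repP; set r := orbit_rep O => rD <-.
rewrite (eq_bigl (mem (cfclass_Iirr L r))); last first.
  move=> s /=; rewrite eq_cfclass_IirrE; apply/andP/idP => [[] // | rs].
  by split=> //; case/imsetP: rs => y Ly ->; apply: irr_kerD_conjg.
rewrite (eq_bigr (fun _ => \sum_(x in L) lin_ext r (g ^ x)%g)); last first.
  by move=> s /imsetP[y Ly ->]; apply: sum_lin_ext_conjg.
rewrite sumr_const card_cfclass_Iirr // cfIndE ?Inertia_sub // mulrnAr -mulrnAl.
congr (_ * _); rewrite -(Lagrange (Inertia_sub L 'chi_r)) natrM invfM.
by rewrite -[_ *+ #|L : _|]mulr_natr -mulrA mulVf ?mulr1 // pnatr_eq0 -lt0n indexg_gt0.
Qed.

Let card_index_mul : (#|A : D| * #|J|)%N = #|L|.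
Proof.
have := mul_cardG A J; rewrite mulAJ setIC -/D -(Lagrange sDA) => cardAJ.
by apply/eqP; rewrite -(eqn_pmul2l (cardG_gt0 D)) mulnA cardAJ mulnC.
Qed.

Lemma cfInd1_sum_orbits :
  'Ind[L, J] 1 = \sum_(O in lin_orbits) 'Ind[L] (lin_ext (orbit_rep O)).
Proof.
apply/cfun_inP => g Lg; rewrite sum_cfunE.
rewrite (eq_bigr _ (fun O PO => cfInd_lin_ext_orbit g PO)) -mulr_sumr.
rewrite -(@partition_big_imset _ _ _ _ _ (cfclass_Iirr L) irr_kerD) exchange_big /=.
rewrite (eq_bigr _ (fun x Lx => sum_lin_ext (groupJ Lg Lx))) -mulr_sumr exchange_big /=.
rewrite (eq_bigr (fun c => \sum_(x in L) ((g ^ x)%g \in J)%:R)); last first.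
  move=> c Ac; rewrite (reindex_inj (mulIg c^-1%g)) /=.
  apply: eq_big => [x | x _]; last by rewrite -conjgM mulgKV.
  by rewrite groupMr // groupV (subsetP sAL).
rewrite sumr_const cfIndE //.
under eq_bigr do rewrite cfun1E.
rewrite -[(\sum_(x in L) _) *+ _]mulr_natr -card_index_mul natrM.
rewrite -[#|A : J :&: A|]/#|A : D|; field.
by rewrite !neq0CG pnatr_eq0 -lt0n indexg_gt0.
Qed.

Lemma cfInd_lin_ext0 : 'Ind[L] (lin_ext 0) = 1.
Proof.
have I0 : ('I_L['chi[A]_0] : {set gT}) = L by rewrite irr0 Inertia1.
apply/cfun_inP => g Lg; rewrite cfIndE ?Inertia_sub // cfun1E Lg.
rewrite (eq_bigr (fun _ => 1)) => [|x Lx]; first by rewrite sumr_const /= I0 mulVf ?neq0CG.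
have Lgx := groupJ Lg Lx; have [_ Agx] := jpartP Lgx.
by rewrite lin_extE I0 Lgx /lin_ext_fun irr_kerD0 irr0 cfun1E Agx mulr1.
Qed.

Theorem cfInd1_lin_ext_decomp : 'Ind[L, J] 1 =
  1 + \sum_(O in lin_orbits :\ [set 0]) 'Ind[L] (lin_ext (orbit_rep O)).
Proof.
have orbit0 : [set 0 : Iirr A] \in lin_orbits.
  by rewrite -(cfclass_Iirr0 A L); apply/imset_f/irr_kerD0.
have rep0 : orbit_rep [set 0] = 0.
  by rewrite /orbit_rep; case: pickP => [r /set1P | /(_ 0)]; rewrite ?set11.
rewrite cfInd1_sum_orbits (bigD1 [set 0]) //= rep0 cfInd_lin_ext0.
by congr (_ + _); apply: eq_bigl => O; rewrite in_setD1 andbC.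
Qed.

End LinearExtension.

Section LinearInduced.

Variable gT : finGroupType.
Implicit Types (G L : {group gT}).

Definition lin_pair G (p : {K : {group gT} & 'CF(K)}) :=
  (tag p \subset G) && (tagged p \is a linear_char).

Definition lin_induced G (phi : 'CF(G)) :=
  exists s, all (lin_pair G) s /\
    phi = \sum_(p <- s) 'Ind[G, tag p] (tagged p).

Lemma lin_induced0 G : lin_induced (0 : 'CF(G)).
Proof. by exists [::]; rewrite big_nil. Qed.

Lemma lin_inducedD G (phi psi : 'CF(G)) :
  lin_induced phi -> lin_induced psi -> lin_induced (phi + psi).
Proof.
move=> [s [lin_s ->]] [t [lin_t ->]].
by exists (s ++ t); rewrite all_cat lin_s lin_t big_cat.
Qed.

Lemma lin_induced_Ind G L (phi : 'CF(L)) :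
  L \subset G -> lin_induced phi -> lin_induced ('Ind[G, L] phi).
Proof.
move=> sLG [s [/allP lin_s ->]]; exists s; split.
  apply/allP => p /lin_s /andP[sKL lin_p].
  by rewrite /lin_pair lin_p (subset_trans sKL sLG).
rewrite linear_sum; apply: eq_big_seq => p /lin_s /andP[sKL _].
exact: cfIndInd.
Qed.

Lemma lin_induced_sum G (I : finType) (P : pred I) (K : I -> {group gT})
    (chi : forall i, 'CF(K i)) :
  (forall i, P i -> K i \subset G) -> (forall i, P i -> chi i \is a linear_char) ->
  lin_induced (\sum_(i | P i) 'Ind[G, K i] (chi i)).
Proof.
move=> sKG lin_chi.
exists [seq Tagged (fun K : {group gT} => 'CF(K)) (chi i) | i <- enum P].
split; last by rewrite big_map big_enum.
apply/allP => p /mapP[i]; rewrite mem_enum => Pi ->.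
by rewrite /lin_pair /= sKG ?lin_chi.
Qed.

Lemma lin_inducedP G (phi : 'CF(G)) : lin_induced phi ->
  exists (r : nat) (Hs : 'I_r -> {group gT}) (chi : forall j : 'I_r, 'CF(Hs j)),
    [/\ forall j, Hs j \subset G, forall j, chi j \is a linear_char
      & phi = \sum_(j < r) 'Ind[G, Hs j] (chi j)].
Proof.
move=> [s [/all_nthP lin_s ->]].
pose p0 := Tagged (fun K : {group gT} => 'CF(K)) (1 : 'CF(1%G)).
exists (size s), (fun j => tag (nth p0 s j)), (fun j => tagged (nth p0 s j)).
split.
- by move=> j; have /andP[] := lin_s p0 j (ltn_ord j).
- by move=> j; have /andP[] := lin_s p0 j (ltn_ord j).
- by rewrite (big_nth p0) big_mkord.
Qed.

End LinearInduced.

Local Open Scope group_scope.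

Lemma cfInd1_supplement (gT : finGroupType) (L A J : {group gT}) :
    A <| L -> J \subset L -> L \subset J * A -> A^`(1) \subset J ->
  exists2 phi : 'CF(L), lin_induced phi & 'Ind[L, J] 1 = 1 + phi.
Proof.
move=> nAL sJL sLJA sA'J; rewrite (cfInd1_lin_ext_decomp nAL sJL sLJA sA'J).
eexists; last reflexivity.
by apply: lin_induced_sum => O _; [apply: Inertia_sub | apply: lin_ext_lin].
Qed.

Lemma cfInd1_mul_der_step (gT : finGroupType) (G H : {group gT}) n :
    H \subset G ->
  exists2 phi : 'CF(G), lin_induced phi &
    'Ind[G, (H * G^`(n.+1))%G] 1 = 'Ind[G, (H * G^`(n))%G] 1 + phi.
Proof.
move=> sHG; set L := (H * G^`(n))%G; set J := (H * G^`(n.+1))%G.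
have sLG : L \subset G by rewrite join_subG sHG der_sub.
have sJL : J \subset L.
  by rewrite join_subG joing_subl (subset_trans (der_subS n G)) ?joing_subr.
have nAL : G^`(n) <| L := normalS (joing_subr _ _) sLG (der_normal n G).
have sLJA : L \subset J * G^`(n).
  by rewrite /= norm_joinEl ?mulSg ?joing_subl // (subset_trans sHG) ?der_norm.
have [phi phi_lin IndJ] := cfInd1_supplement nAL sJL sLJA (joing_subr _ _).
exists ('Ind[G, L] phi); first exact: lin_induced_Ind.
by rewrite -(cfIndInd _ sLG sJL) IndJ linearD.
Qed.

Lemma cfInd1_mul_der (gT : finGroupType) (G H : {group gT}) i m :
    H \subset G ->
  exists2 phi : 'CF(G), lin_induced phi &
    'Ind[G, (H * G^`(i + m))%G] 1 = 'Ind[G, (H * G^`(i))%G] 1 + phi.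
Proof.
move=> sHG; elim: m => [|m [phi phi_lin IHm]].
  by exists 0%R; [exact: lin_induced0 | rewrite addn0 addr0].
have [psi psi_lin step] := cfInd1_mul_der_step (i + m) sHG.
exists (phi + psi); first exact: lin_inducedD.
by rewrite addnS step IHm addrA.
Qed.

Theorem corollary3p1p4 (gT : finGroupType) (G H : {group gT}) (i : nat) :
  solvable G -> H \subset G -> (1 <= i)%N ->
  exists (r : nat) (Hs : 'I_r -> {group gT}) (chi : forall j : 'I_r, 'CF(Hs j)),
    [/\ forall j, Hs j \subset G,
        forall j, chi j \is a linear_char
      & 'Ind[G, H] 1 =
          'Ind[G, (H * G^`(i))%G] 1 + \sum_(j < r) 'Ind[G, Hs j] (chi j)].
Proof.
(* The argument works for every i. *)
move=> /derivedP[n derG1] sHG _.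
have derGin1 : G^`(i + n) = 1.
  by elim: i => [|k IHk]; rewrite ?add0n // addSn dergSn IHk commG1.
have joinH : (H * G^`(i + n))%G = H by apply: val_inj; rewrite /= derGin1 joingG1.
have [phi phi_lin] := cfInd1_mul_der i n sHG; rewrite joinH => ->.
have [r [Hs [chi [sHsG lin_chi ->]]]] := lin_inducedP phi_lin.
by exists r, Hs, chi.
Qed.
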